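(* Let $(\sigma_k)_{k\ge1}$ be a sequence of nonnegative real numbers with mean $\sigma$, i.e. $\lim_{n\to\infty}\frac1n\sum_{k=1}^n\sigma_k=\sigma$. Fix constants $0\le\gamma<\delta<1$. Then \[ \lim_{n\to\infty}\frac1n\sum_{k=\lceil\gamma n\rceil}^{\lfloor\delta n\rfloor}\sigma_k\left(1-\frac kn\right)^{\sigma-1}=(1-\gamma)^\sigma-(1-\delta)^\sigma. \] *)

From Stdlib Require Import Reals ZArith Arith.
From Coquelicot Require Import Coquelicot.
Open Scope R_scope.

(* floor and ceiling of a real, as naturals (arguments used are >= 0).
   Stdlib's [Int_part x] is the integer floor of x. *)
Definition floor_nat (x : R) : nat := Z.to_nat (Int_part x).
Definition ceil_nat (x : R) : nat := Z.to_nat (- Int_part (- x)).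

(* sum_{k=m}^{n} f k  (empty, i.e. 0, if n < m) *)
Definition rsum (f : nat -> R) (m n : nat) : R := @sum_n_m R_AbelianMonoid f m n.

(* Let S(n) = s_1 + ... + s_n, so that S(n)/n -> sigma and hence S(c_n)/n -> sigma x
   whenever c_n = x n + O(1).  Cut [gamma, delta] into m pieces of length h with grid
   points x_j.  On the block of indices k with k/n in [x_j, x_(j+1)], the weight
   f(k/n) = (1 - k/n)^(sigma-1) is within L h of f(x_j) (f is Lipschitz on [0, delta]),
   so the normalised sum is within L h S(delta n)/n of
   sum_j f(x_j) (S(x_(j+1) n) - S(x_j n))/n, whose limit is sum_j f(x_j) sigma h.
   Since F(x) = (1 - x)^sigma has F' = -sigma f, the mean value theorem puts that
   Riemann sum within O(h) of F(gamma) - F(delta); letting h -> 0 gives the limit. *)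

From Stdlib Require Import Reals ZArith Lra Lia.
From Coquelicot Require Import Coquelicot.
Open Scope R_scope.

Lemma rsum_n_n (a : nat -> R) p : rsum a p p = a p.
Proof. apply sum_n_n. Qed.

Lemma rsum_Sm (a : nat -> R) p q : (p <= S q)%nat -> rsum a p (S q) = rsum a p q + a (S q).
Proof. intros; unfold rsum; rewrite sum_n_Sm; auto. Qed.

Lemma rsum_empty (a : nat -> R) p q : (q < p)%nat -> rsum a p q = 0.
Proof. intros; unfold rsum; rewrite sum_n_m_zero; auto. Qed.

Lemma rsum_Chasles (a : nat -> R) p m q :
  (p <= S m)%nat -> (m <= q)%nat -> rsum a p q = rsum a p m + rsum a (S m) q.
Proof. intros; unfold rsum; rewrite (sum_n_m_Chasles _ p m q); auto. Qed.

Lemma rsum_ext (a b : nat -> R) p q : (forall k, a k = b k) -> rsum a p q = rsum b p q.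
Proof. apply sum_n_m_ext. Qed.

Lemma rsum_scal_l (c : R) (a : nat -> R) p q : rsum (fun k => c * a k) p q = c * rsum a p q.
Proof. apply (sum_n_m_mult_l (K := R_Ring)). Qed.

Lemma rsum_minus (a b : nat -> R) p q : rsum (fun k => a k - b k) p q = rsum a p q - rsum b p q.
Proof.
  enough (E : rsum (fun k => a k - b k) p q + rsum b p q = rsum a p q) by lra.
  unfold rsum; rewrite <- (sum_n_m_plus (G := R_AbelianMonoid)).
  apply sum_n_m_ext; intros k; change (a k - b k + b k = a k); ring.
Qed.

Lemma rsum_const (c : R) m : rsum (fun _ => c) 0 m = INR (S m) * c.
Proof. unfold rsum; rewrite sum_n_m_const, Nat.sub_0_r; reflexivity. Qed.

Lemma rsum_le (a b : nat -> R) p q :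
  (forall k, (p <= k <= q)%nat -> a k <= b k) -> rsum a p q <= rsum b p q.
Proof.
  induction q as [|q IH]; intros H.
  - destruct p as [|p].
    + rewrite !rsum_n_n; apply H; lia.
    + rewrite !rsum_empty by lia; lra.
  - destruct (le_lt_dec p (S q)) as [Hp|Hp].
    + rewrite !rsum_Sm by exact Hp.
      apply Rplus_le_compat; [apply IH; intros; apply H|apply H]; lia.
    + rewrite !rsum_empty by exact Hp; lra.
Qed.

Lemma rsum_nonneg (a : nat -> R) p q :
  (forall k, (p <= k <= q)%nat -> 0 <= a k) -> 0 <= rsum a p q.
Proof.
  intros H; replace 0 with (rsum (fun _ => 0) p q)
    by apply (sum_n_m_const_zero (G := R_AbelianMonoid)).
  apply rsum_le, H.
Qed.

Lemma rsum_abs_le (a w : nat -> R) p q :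
  (forall k, (p <= k <= q)%nat -> Rabs (a k) <= w k) -> Rabs (rsum a p q) <= rsum w p q.
Proof.
  intros H; eapply Rle_trans; [apply (norm_sum_n_m (K := R_AbsRing) a)|].
  apply rsum_le, H.
Qed.

Lemma rsum_abs_diff (a b w : nat -> R) p q :
  (forall k, (p <= k <= q)%nat -> Rabs (a k - b k) <= w k) ->
  Rabs (rsum a p q - rsum b p q) <= rsum w p q.
Proof. intros H; rewrite <- rsum_minus; apply rsum_abs_le, H. Qed.

Lemma rsum_telescope (g : nat -> R) m : rsum (fun j => g j - g (S j)) 0 m = g O - g (S m).
Proof.
  induction m as [|m IH]; [apply rsum_n_n|].
  rewrite rsum_Sm, IH by lia; ring.
Qed.

Lemma is_lim_seq_rsum (u : nat -> nat -> R) (l : nat -> R) p q :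
  (forall j, (p <= j <= q)%nat -> is_lim_seq (u j) (l j)) ->
  is_lim_seq (fun n => rsum (fun j => u j n) p q) (rsum l p q).
Proof.
  induction q as [|q IH]; intros H.
  - destruct p as [|p].
    + rewrite rsum_n_n; apply (is_lim_seq_ext (u 0%nat)); [|apply H; lia].
      intros n; symmetry; exact (rsum_n_n (fun j => u j n) 0).
    + rewrite rsum_empty by lia.
      apply (is_lim_seq_ext (fun _ => 0)); [|apply is_lim_seq_const].
      intros n; symmetry; apply (rsum_empty (fun j => u j n)); lia.
  - destruct (le_lt_dec p (S q)) as [Hp|Hp].
    + rewrite rsum_Sm by exact Hp.
      apply (is_lim_seq_ext (fun n => rsum (fun j => u j n) p q + u (S q) n));
        [intros n; symmetry; exact (rsum_Sm (fun j => u j n) p q Hp)|].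
      apply is_lim_seq_plus'; [apply IH; intros; apply H|apply H]; lia.
    + rewrite rsum_empty by exact Hp.
      apply (is_lim_seq_ext (fun _ => 0)); [|apply is_lim_seq_const].
      intros n; symmetry; exact (rsum_empty (fun j => u j n) p (S q) Hp).
Qed.

Lemma rsum_blocks (a : nat -> R) (c : nat -> nat) m :
  (forall j, (c j <= c (S j))%nat) ->
  rsum a (S (c O)) (c (S m)) = rsum (fun j => rsum a (S (c j)) (c (S j))) 0 m.
Proof.
  intros Hc.
  assert (Hc0 : forall j, (c O <= c j)%nat).
  { induction j as [|j IH]; [lia|]. specialize (Hc j); lia. }
  induction m as [|m IH]; [symmetry; exact (rsum_n_n (fun j => rsum a (S (c j)) (c (S j))) 0)|].
  rewrite rsum_Sm, <- IH by lia.
  apply rsum_Chasles; [specialize (Hc0 (S m))|apply Hc]; lia.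
Qed.

Lemma rsum_weighted_deviation (w g : nat -> R) (a r : R) p q :
  (forall k, (p <= k <= q)%nat -> 0 <= w k /\ Rabs (g k - a) <= r) ->
  Rabs (rsum (fun k => w k * g k) p q - a * rsum w p q) <= r * rsum w p q.
Proof.
  intros H; rewrite <- !rsum_scal_l; apply rsum_abs_diff.
  intros k Hk; destruct (H k Hk) as [Hw Hg].
  replace (w k * g k - a * w k) with (w k * (g k - a)) by ring.
  rewrite Rabs_mult, Rabs_pos_eq by exact Hw.
  rewrite Rmult_comm; apply Rmult_le_compat_r; assumption.
Qed.

Lemma floor_nat_spec x : 0 <= x -> x - 1 < INR (floor_nat x) <= x.
Proof.
  intros Hx; destruct (base_Int_part x) as [H1 H2].
  assert (Hz : (-1 < Int_part x)%Z) by (apply lt_IZR; lra).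
  unfold floor_nat; rewrite INR_IZR_INZ, Z2Nat.id by lia; lra.
Qed.

Lemma ceil_nat_spec x : 0 <= x -> x <= INR (ceil_nat x) < x + 1.
Proof.
  intros Hx; destruct (base_Int_part (- x)) as [H1 H2].
  assert (Hz : (Int_part (- x) <= 0)%Z) by (apply le_IZR; lra).
  unfold ceil_nat; rewrite INR_IZR_INZ, Z2Nat.id, opp_IZR by lia; lra.
Qed.

Definition grid (gamma h : R) (j : nat) : R := gamma + INR j * h.

(* [S (cut gamma h 0 n)] is the lower summation index [max 1 (ceil (gamma n))]. *)
Definition cut (gamma h : R) (j n : nat) : nat :=
  match j with
  | O => pred (Nat.max 1 (ceil_nat (gamma * INR n)))
  | S _ => floor_nat (grid gamma h j * INR n)
  end.

Lemma grid_S gamma h j : grid gamma h (S j) = grid gamma h j + h.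
Proof. unfold grid; rewrite S_INR; ring. Qed.

Lemma grid_nonneg gamma h j : 0 <= gamma -> 0 <= h -> 0 <= grid gamma h j.
Proof.
  intros Hg Hh; unfold grid.
  assert (0 <= INR j * h) by (apply Rmult_le_pos; [apply pos_INR|exact Hh]); lra.
Qed.

Lemma cut_bounds gamma h j n : 0 <= gamma -> 0 <= h ->
  grid gamma h j * INR n - 1 <= INR (cut gamma h j n) <= grid gamma h j * INR n.
Proof.
  intros Hg Hh; assert (Hn := pos_INR n).
  assert (Hx : 0 <= grid gamma h j * INR n)
    by (apply Rmult_le_pos; [apply grid_nonneg|]; assumption).
  destruct j as [|j]; simpl cut.
  - unfold grid in *; simpl INR in *; rewrite Rmult_0_l, Rplus_0_r in *.
    destruct (ceil_nat_spec (gamma * INR n) Hx) as [C1 C2].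
    destruct (ceil_nat (gamma * INR n)) as [|k].
    + simpl in *; lra.
    + simpl pred; rewrite S_INR in C1, C2; lra.
  - destruct (floor_nat_spec _ Hx); lra.
Qed.

Lemma cut_le_succ gamma h j n : 0 <= gamma -> 0 <= h -> 1 <= h * INR n ->
  (cut gamma h j n <= cut gamma h (S j) n)%nat.
Proof.
  intros Hg Hh Hhn; apply INR_le.
  destruct (cut_bounds gamma h j n Hg Hh); destruct (cut_bounds gamma h (S j) n Hg Hh).
  rewrite grid_S in *; lra.
Qed.

Lemma is_lim_seq_inv_INR : is_lim_seq (fun n => / INR n) 0.
Proof. exact (is_lim_seq_inv INR p_infty is_lim_seq_INR ltac:(discriminate)). Qed.

Lemma is_lim_seq_INR_ratio (x : R) (c : nat -> nat) :
  (forall n, x * INR n - 1 <= INR (c n) <= x * INR n) ->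
  is_lim_seq (fun n => INR (c n) / INR n) x.
Proof.
  intros Hc; apply is_lim_seq_le_le_loc with (u := fun n => x - / INR n) (w := fun _ => x).
  - exists 1%nat; intros n Hn; apply le_INR in Hn; simpl in Hn.
    destruct (Hc n) as [H1 H2].
    replace (INR (c n) / INR n) with (x + (INR (c n) - x * INR n) * / INR n) by (field; lra).
    assert (0 < / INR n) by (apply Rinv_0_lt_compat; lra).
    split.
    + enough (-1 * / INR n <= (INR (c n) - x * INR n) * / INR n) by lra.
      apply Rmult_le_compat_r; lra.
    + enough ((INR (c n) - x * INR n) * / INR n <= 0) by lra.
      apply Rmult_le_0_r; lra.
  - replace (Finite x) with (Finite (x - 0)) by (f_equal; ring).
    apply is_lim_seq_minus'; [apply is_lim_seq_const|apply is_lim_seq_inv_INR].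
  - apply is_lim_seq_const.
Qed.

Lemma is_lim_seq_approx (u : nat -> R) (l : R) :
  (forall eps, 0 < eps -> exists (v : nat -> R) (l' : R),
     is_lim_seq v l' /\ Rabs (l' - l) <= eps /\ eventually (fun n => Rabs (u n - v n) <= eps)) ->
  is_lim_seq u l.
Proof.
  intros H; apply is_lim_seq_spec; intros [eps Heps]; simpl.
  assert (He3 : 0 < eps / 3) by lra.
  destruct (H (eps / 3) He3) as [v [l' [Hv [Hl Hu]]]].
  apply is_lim_seq_spec in Hv; specialize (Hv (mkposreal _ He3)); simpl in Hv.
  eapply filter_imp; [|exact (filter_and _ _ Hu Hv)]; intros n [H1 H2].
  replace (u n - l) with ((u n - v n) + (v n - l') + (l' - l)) by ring.
  eapply Rle_lt_trans; [apply Rabs_triang|].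
  eapply Rle_lt_trans; [apply Rplus_le_compat_r, Rabs_triang|].
  lra.
Qed.

Lemma exists_INR_S_div_le (a r : R) : 0 < r -> exists m, a / INR (S m) <= r.
Proof.
  intros Hr; destruct (INR_unbounded (a / r)) as [m Hm]; exists m.
  assert (Hm' : a / r < INR (S m)) by (rewrite S_INR; lra).
  assert (0 < INR (S m)) by apply lt_0_INR, Nat.lt_0_succ.
  apply Rmult_lt_compat_r with (r := r) in Hm'; [|exact Hr].
  replace (a / r * r) with a in Hm' by (field; lra).
  apply Rmult_le_reg_r with (INR (S m)); [assumption|].
  replace (a / INR (S m) * INR (S m)) with a by (field; lra); lra.
Qed.

Lemma lipschitz_of_derive_bound (g g' : R -> R) (a b M : R) :
  (forall z, a <= z <= b -> derivable_pt_lim g z (g' z)) ->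
  (forall z, a <= z <= b -> Rabs (g' z) <= M) ->
  forall x y, a <= x <= b -> a <= y <= b -> Rabs (g x - g y) <= M * Rabs (x - y).
Proof.
  intros Hg Hg' x y Hx Hy.
  assert (Hab : forall z, Rmin y x <= z <= Rmax y x -> a <= z <= b).
  { intros z [Hz1 Hz2]; split.
    - apply Rle_trans with (Rmin y x); [apply Rmin_glb; lra|exact Hz1].
    - apply Rle_trans with (Rmax y x); [exact Hz2|apply Rmax_lub; lra]. }
  destruct (MVT_abs g g' y x) as [z [Hzr Hz]]; [intros z Hz; apply Hg, Hab, Hz|].
  rewrite Hzr; apply Rmult_le_compat_r; [apply Rabs_pos|apply Hg', Hab, Hz].
Qed.

Lemma derivable_pt_lim_Rpower_one_minus (c x : R) : x < 1 ->
  derivable_pt_lim (fun y => Rpower (1 - y) c) x (- (c * Rpower (1 - x) (c - 1))).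
Proof.
  intros Hx.
  assert (H1 : derivable_pt_lim (fun y => 1 - y) x (0 - 1)).
  { apply (derivable_pt_lim_minus (fct_cte 1) id);
      [apply derivable_pt_lim_const|apply derivable_pt_lim_id]. }
  assert (H2 := derivable_pt_lim_power (1 - x) c ltac:(lra)).
  replace (- (c * Rpower (1 - x) (c - 1))) with (c * Rpower (1 - x) (c - 1) * (0 - 1)) by ring.
  exact (derivable_pt_lim_comp _ _ _ _ _ H1 H2).
Qed.

Lemma Rpower_one_minus_le (c d x : R) : 0 <= x <= d -> d < 1 ->
  Rpower (1 - x) c <= exp (Rabs c * - ln (1 - d)).
Proof.
  intros Hx Hd; unfold Rpower.
  assert (ln (1 - d) <= ln (1 - x)) by (apply ln_le; lra).
  assert (ln (1 - x) <= 0) by (rewrite <- ln_1; apply ln_le; lra).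
  assert (E : c * ln (1 - x) <= Rabs c * - ln (1 - d)).
  { apply (Rle_trans _ _ _ (Rle_abs _)).
    rewrite Rabs_mult, (Rabs_left1 (ln (1 - x))) by lra.
    apply Rmult_le_compat_l; [apply Rabs_pos|lra]. }
  destruct E as [E|E]; [left; apply exp_increasing, E|right; rewrite E; reflexivity].
Qed.

Lemma Rpower_one_minus_lipschitz (c d : R) : 0 <= d < 1 -> exists L, 0 <= L /\
  forall x y, 0 <= x <= d -> 0 <= y <= d ->
    Rabs (Rpower (1 - x) c - Rpower (1 - y) c) <= L * Rabs (x - y).
Proof.
  intros Hd; set (L := Rabs c * exp (Rabs (c - 1) * - ln (1 - d))).
  exists L; split; [apply Rmult_le_pos; [apply Rabs_pos|left; apply exp_pos]|].
  apply (lipschitz_of_derive_bound _ (fun z => - (c * Rpower (1 - z) (c - 1)))).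
  - intros z Hz; apply derivable_pt_lim_Rpower_one_minus; lra.
  - intros z Hz; rewrite Rabs_Ropp, Rabs_mult, (Rabs_pos_eq (Rpower _ _)) by (left; apply exp_pos).
    apply Rmult_le_compat_l; [apply Rabs_pos|apply Rpower_one_minus_le; lra].
Qed.

Section WeightedMeans.

Variables (s : nat -> R) (sigma : R).
Hypothesis hmean : is_lim_seq (fun n => / INR n * rsum s 1 n) sigma.

Lemma is_lim_seq_partial_mean_ratio (x : R) (c : nat -> nat) : 0 <= x ->
  (forall n, x * INR n - 1 <= INR (c n) <= x * INR n) ->
  is_lim_seq (fun n => / INR n * rsum s 1 (c n)) (sigma * x).
Proof.
  intros [Hx|<-] Hc.
  - assert (Hc_inf : filterlim c eventually eventually).
    { intros P [N HN]. destruct (INR_unbounded ((INR N + 1) / x)) as [M HM].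
      exists M; intros n Hn; apply HN, INR_le.
      apply le_INR in Hn; destruct (Hc n) as [Hcn _].
      assert (INR N + 1 <= x * INR M).
      { apply Rmult_lt_compat_l with (r := x) in HM; [|exact Hx].
        replace (x * ((INR N + 1) / x)) with (INR N + 1) in HM by (field; lra); lra. }
      assert (x * INR M <= x * INR n) by (apply Rmult_le_compat_l; lra); lra. }
    apply (is_lim_seq_ext_loc (fun n => / INR (c n) * rsum s 1 (c n) * (INR (c n) / INR n))).
    + destruct (Hc_inf (fun k => (1 <= k)%nat) (ex_intro _ 1%nat (fun k Hk => Hk))) as [N HN].
      exists N; intros n Hn; specialize (HN n Hn); apply le_INR in HN; simpl in HN.
      destruct (Hc n) as [_ Hcn].
      assert (INR n <> 0) by (intros E; rewrite E, Rmult_0_r in Hcn; lra).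
      field; lra.
    + apply is_lim_seq_mult'; [exact (is_lim_seq_subseq _ _ c Hc_inf hmean)|].
      apply is_lim_seq_INR_ratio, Hc.
  - rewrite Rmult_0_r.
    apply (is_lim_seq_ext (fun _ => 0)); [|apply is_lim_seq_const].
    intros n; destruct (Hc n) as [_ Hcn]; rewrite Rmult_0_l in Hcn.
    assert (Hc0 : (c n <= 0)%nat) by (apply INR_le; exact Hcn).
    replace (c n) with 0%nat by lia.
    rewrite rsum_empty by lia; ring.
Qed.

Hypothesis hs : forall k, (1 <= k)%nat -> 0 <= s k.
Variables (f F : R -> R) (gamma delta L : R).
Hypotheses (hg : 0 <= gamma) (hgd : gamma < delta) (hL : 0 <= L).
Hypothesis f_lip : forall x y, gamma <= x <= delta -> gamma <= y <= delta ->
  Rabs (f x - f y) <= L * Rabs (x - y).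
Hypothesis F_deriv : forall x, gamma <= x <= delta -> derivable_pt_lim F x (- (sigma * f x)).

Section Grid.

Variables (m : nat) (h : R).
Hypotheses (hh : 0 < h) (hmh : h * INR (S m) = delta - gamma).

Lemma grid_top : grid gamma h (S m) = delta.
Proof. unfold grid; rewrite Rmult_comm, hmh; ring. Qed.

Lemma grid_range j : (j <= S m)%nat -> gamma <= grid gamma h j <= delta.
Proof.
  intros Hj; apply le_INR in Hj.
  assert (0 <= INR j * h) by (apply Rmult_le_pos; [apply pos_INR|lra]).
  assert (INR j * h <= INR (S m) * h) by (apply Rmult_le_compat_r; lra).
  unfold grid; lra.
Qed.

Lemma riemann_sum_error :
  Rabs (rsum (fun j => f (grid gamma h j) * (sigma * h)) 0 m - (F gamma - F delta))
  <= Rabs sigma * L * (delta - gamma) * h.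
Proof.
  replace (F gamma - F delta) with (rsum (fun j => F (grid gamma h j) - F (grid gamma h (S j))) 0 m)
    by (rewrite rsum_telescope, grid_top; unfold grid; simpl INR;
        rewrite Rmult_0_l, Rplus_0_r; reflexivity).
  replace (Rabs sigma * L * (delta - gamma) * h) with (rsum (fun _ => Rabs sigma * L * h * h) 0 m)
    by (rewrite rsum_const, <- hmh; ring).
  apply rsum_abs_diff; intros j Hj.
  destruct (grid_range j ltac:(lia)) as [X1 X2].
  destruct (grid_range (S j) ltac:(lia)) as [X3 X4].
  rewrite grid_S in *.
  destruct (MVT_cor2 F (fun z => - (sigma * f z)) (grid gamma h j) (grid gamma h j + h))
    as [z [Hz Hzr]]; [lra|intros z Hz; apply F_deriv; lra|].
  replace (f (grid gamma h j) * (sigma * h) - (F (grid gamma h j) - F (grid gamma h j + h)))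
    with (sigma * h * (f (grid gamma h j) - f z)) by lra.
  rewrite Rabs_mult, Rabs_mult, (Rabs_pos_eq h) by lra.
  replace (Rabs sigma * L * h * h) with (Rabs sigma * h * (L * h)) by ring.
  apply Rmult_le_compat_l; [apply Rmult_le_pos; [apply Rabs_pos|lra]|].
  eapply Rle_trans; [apply f_lip; lra|].
  apply Rmult_le_compat_l; [exact hL|]. rewrite Rabs_left1; lra.
Qed.

Lemma cut_mono i j n : 1 <= h * INR n -> (i <= j)%nat ->
  (cut gamma h i n <= cut gamma h j n)%nat.
Proof.
  intros Hhn Hij; induction Hij as [|j _ IH]; [lia|].
  eapply Nat.le_trans; [exact IH|apply cut_le_succ; lra].
Qed.

Lemma cut_block_ratio j n k : 0 < INR n ->
  (S (cut gamma h j n) <= k <= cut gamma h (S j) n)%nat ->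
  grid gamma h j <= INR k / INR n <= grid gamma h (S j).
Proof.
  intros Hn Hk.
  destruct (cut_bounds gamma h j n hg ltac:(lra)) as [C1 _].
  destruct (cut_bounds gamma h (S j) n hg ltac:(lra)) as [_ C2].
  assert (K1 : INR (cut gamma h j n) + 1 <= INR k) by (rewrite <- S_INR; apply le_INR; lia).
  assert (K2 : INR k <= INR (cut gamma h (S j) n)) by (apply le_INR; lia).
  split; [apply Rmult_le_reg_r with (INR n)|apply Rmult_le_reg_r with (INR n)];
    unfold Rdiv; rewrite ?Rmult_assoc, ?Rinv_l, ?Rmult_1_r by lra; lra.
Qed.

Lemma block_sum_error n : 1 <= h * INR n ->
  Rabs (/ INR n * rsum (fun k => s k * f (INR k / INR n))
                       (S (cut gamma h 0 n)) (cut gamma h (S m) n)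
        - rsum (fun j => f (grid gamma h j) *
                   (/ INR n * rsum s 1 (cut gamma h (S j) n)
                    - / INR n * rsum s 1 (cut gamma h j n))) 0 m)
  <= L * h * (/ INR n * rsum s 1 (cut gamma h (S m) n)).
Proof.
  intros Hhn.
  assert (Hn : 0 < INR n).
  { destruct (Rle_lt_dec (INR n) 0) as [Hn|Hn]; [|exact Hn].
    assert (h * INR n <= 0) by (apply Rmult_le_0_l; lra); lra. }
  assert (Hn' : 0 <= / INR n) by (left; apply Rinv_0_lt_compat, Hn).
  assert (Hc : forall i j, (i <= j)%nat -> (cut gamma h i n <= cut gamma h j n)%nat)
    by (intros; apply cut_mono; assumption).
  assert (Hc1 : forall j, (cut gamma h j n <= cut gamma h (S j) n)%nat) by (intros; apply Hc; lia).
  pose (block j := rsum s (S (cut gamma h j n)) (cut gamma h (S j) n)).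
  assert (HB : rsum (fun j => f (grid gamma h j) *
                   (/ INR n * rsum s 1 (cut gamma h (S j) n)
                    - / INR n * rsum s 1 (cut gamma h j n))) 0 m
               = / INR n * rsum (fun j => f (grid gamma h j) * block j) 0 m).
  { rewrite <- rsum_scal_l; apply rsum_ext; intros j.
    rewrite (rsum_Chasles s 1 (cut gamma h j n) (cut gamma h (S j) n)) by (try apply Hc1; lia).
    unfold block; ring. }
  rewrite HB, (rsum_blocks _ (fun j => cut gamma h j n) m Hc1).
  rewrite <- Rmult_minus_distr_l, Rabs_mult, (Rabs_pos_eq (/ INR n)) by exact Hn'.
  rewrite (Rmult_comm (L * h)), Rmult_assoc; apply Rmult_le_compat_l; [exact Hn'|].
  eapply Rle_trans.
  { apply (rsum_abs_diff _ _ (fun j => L * h * block j)).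
    intros j Hj; apply (rsum_weighted_deviation s (fun k => f (INR k / INR n))).
    intros k Hk; split; [apply hs; lia|].
    destruct (cut_block_ratio j n k Hn Hk) as [R1 R2].
    destruct (grid_range j ltac:(lia)); destruct (grid_range (S j) ltac:(lia)).
    rewrite grid_S in *.
    eapply Rle_trans; [apply f_lip; lra|].
    apply Rmult_le_compat_l; [exact hL|]; rewrite Rabs_pos_eq; lra. }
  unfold block; rewrite rsum_scal_l, <- (rsum_blocks s (fun j => cut gamma h j n) m Hc1).
  rewrite (rsum_Chasles s 1 (cut gamma h 0 n) (cut gamma h (S m) n)) by (try apply Hc; lia).
  assert (0 <= rsum s 1 (cut gamma h 0 n)) by (apply rsum_nonneg; intros; apply hs; lia).
  assert (0 <= L * h) by (apply Rmult_le_pos; lra).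
  nra.
Qed.

End Grid.

Lemma is_lim_seq_weighted_partial_mean :
  is_lim_seq (fun n => / INR n * rsum (fun k => s k * f (INR k / INR n))
                         (Nat.max 1 (ceil_nat (gamma * INR n))) (floor_nat (delta * INR n)))
             (F gamma - F delta).
Proof.
  apply is_lim_seq_approx; intros eps Heps.
  (* [K * h] bounds both the Riemann-sum error and, eventually, the block error. *)
  set (K := L * (Rabs sigma * (delta - gamma) + Rabs (sigma * delta) + 1)).
  assert (HK : 0 <= K) by (apply Rmult_le_pos; [|assert (0 <= Rabs sigma * (delta - gamma)) by
    (apply Rmult_le_pos; [apply Rabs_pos|lra]); pose proof (Rabs_pos (sigma * delta))]; lra).
  destruct (exists_INR_S_div_le (delta - gamma) (eps / (K + 1))) as [m Hm];
    [apply Rdiv_lt_0_compat; lra|].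
  set (h := (delta - gamma) / INR (S m)).
  assert (HSm : 0 < INR (S m)) by apply lt_0_INR, Nat.lt_0_succ.
  assert (hh : 0 < h) by (apply Rdiv_lt_0_compat; lra).
  assert (hmh : h * INR (S m) = delta - gamma) by (unfold h; field; lra).
  assert (HKh : K * h <= eps).
  { apply Rmult_le_compat_l with (r := K + 1) in Hm; [|lra].
    replace ((K + 1) * (eps / (K + 1))) with eps in Hm by (field; lra).
    fold h in Hm; nra. }
  assert (Hcut : forall j n,
             grid gamma h j * INR n - 1 <= INR (cut gamma h j n) <= grid gamma h j * INR n)
    by (intros; apply cut_bounds; lra).
  assert (Hgrid : forall j, 0 <= grid gamma h j) by (intros; apply grid_nonneg; lra).
  exists (fun n => rsum (fun j => f (grid gamma h j) *
                   (/ INR n * rsum s 1 (cut gamma h (S j) n)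
                    - / INR n * rsum s 1 (cut gamma h j n))) 0 m).
  exists (rsum (fun j => f (grid gamma h j) * (sigma * h)) 0 m).
  split; [|split].
  - apply is_lim_seq_rsum; intros j _.
    replace (sigma * h) with (sigma * grid gamma h (S j) - sigma * grid gamma h j)
      by (rewrite grid_S; ring).
    apply is_lim_seq_mult'; [apply is_lim_seq_const|].
    apply is_lim_seq_minus'; apply is_lim_seq_partial_mean_ratio; auto.
  - eapply Rle_trans; [apply (riemann_sum_error m h hh hmh)|].
    eapply Rle_trans; [|exact HKh]; apply Rmult_le_compat_r; [lra|].
    unfold K; assert (0 <= Rabs (sigma * delta)) by apply Rabs_pos; nra.
  - assert (Htop : is_lim_seq (fun n => / INR n * rsum s 1 (cut gamma h (S m) n)) (sigma * delta)).
    { rewrite <- (grid_top m h hmh); apply is_lim_seq_partial_mean_ratio; auto. }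
    apply is_lim_seq_spec in Htop; specialize (Htop (mkposreal 1 Rlt_0_1)).
    change (pos (mkposreal 1 Rlt_0_1)) with 1 in Htop.
    assert (Hlarge : eventually (fun n => 1 <= h * INR n)).
    { destruct (INR_unbounded (/ h)) as [N HN]; exists N; intros n Hn.
      apply le_INR in Hn; apply Rmult_le_reg_l with (/ h); [apply Rinv_0_lt_compat, hh|].
      rewrite <- Rmult_assoc, Rinv_l, Rmult_1_l, Rmult_1_r by lra; lra. }
    eapply filter_imp; [|exact (filter_and _ _ Hlarge Htop)]; intros n [Hn Hsum].
    replace (Nat.max 1 (ceil_nat (gamma * INR n))) with (S (cut gamma h 0 n))
      by (simpl; destruct (ceil_nat (gamma * INR n)); reflexivity).
    replace (floor_nat (delta * INR n)) with (cut gamma h (S m) n)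
      by (simpl cut; rewrite (grid_top m h hmh); reflexivity).
    eapply Rle_trans; [apply (block_sum_error m h hh hmh n Hn)|].
    eapply Rle_trans; [|exact HKh].
    apply Rabs_lt_between in Hsum.
    assert (sigma * delta <= Rabs (sigma * delta)) by apply Rle_abs.
    assert (0 <= L * h) by (apply Rmult_le_pos; lra).
    assert (0 <= L * h * (Rabs sigma * (delta - gamma)))
      by (apply Rmult_le_pos; [|apply Rmult_le_pos; [apply Rabs_pos|]]; lra).
    apply Rle_trans with (L * h * (Rabs (sigma * delta) + 1)); [apply Rmult_le_compat_l; lra|].
    unfold K; lra.
Qed.

End WeightedMeans.

Theorem lemma2p8 (s : nat -> R) (sigma gamma delta : R)
  (hs : forall k : nat, (1 <= k)%nat -> 0 <= s k)
  (hmean : is_lim_seq (fun n : nat => / INR n * rsum s 1 n) sigma)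
  (hg : 0 <= gamma) (hgd : gamma < delta) (hd : delta < 1) :
  is_lim_seq
    (fun n : nat =>
       / INR n *
       rsum (fun k : nat => s k * Rpower (1 - INR k / INR n) (sigma - 1))
            (Nat.max 1 (ceil_nat (gamma * INR n))) (floor_nat (delta * INR n)))
    (Rpower (1 - gamma) sigma - Rpower (1 - delta) sigma).
Proof.
  destruct (Rpower_one_minus_lipschitz (sigma - 1) delta) as [L [HL Hlip]]; [lra|].
  apply (is_lim_seq_weighted_partial_mean s sigma hmean hs
           (fun x => Rpower (1 - x) (sigma - 1)) (fun x => Rpower (1 - x) sigma) gamma delta L
           hg hgd HL).
  - intros x y Hx Hy; apply Hlip; lra.
  - intros x Hx; apply derivable_pt_lim_Rpower_one_minus; lra.
Qed.
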